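(* If $\Gamma\vdash_r M:\delta\mid\Delta$ (derivable in the restricted type system) for some restricted basis $\Gamma$, restricted name context $\Delta$ and $\delta\in\Lambda^r_D$, then $M$ is strongly normalising.
   Context: $\lambda\mu$ terms and commands: $M::=x\mid\lambda x.M\mid MN\mid\mu\alpha.\mathsf C$ and $\mathsf C::=[\alpha]M$. Structural substitution $T[\alpha\Leftarrow L]$ replaces, recursively, every subterm $[\alpha]N$ by $[\alpha](N[\alpha\Leftarrow L])L$. $M$ is strongly normalising if there is no infinite reduction sequence from $M$ for the compatible closure of $(\lambda x.M)N\to M[N/x]$ and $(\mu\alpha.\mathsf C)N\to\mu\alpha.\mathsf C[\alpha\Leftarrow N]$. (The paper notes that adding the renaming rule $[\alpha]\mu\beta.\mathsf C\to\mathsf C[\alpha/\beta]$ does not change this set.) Full type system. $R=\{\bot\sqsubset\top\}$ and $\psi=\psi_\top$. - $\Lambda_R$: $\rho::=\psi_a\mid\omega\mid\rho\wedge\rho$; - $\Lambda_D$: $\delta::=\rho\mid\kappa\to\rho\mid\omega\mid\delta\wedge\delta$; - $\Lambda_C$: $\kappa::=\delta\times\kappa\mid\omega\mid\kappa\wedge\kappa$. The relations $\le_R,\le_D,\le_C$ are the least reflexive, transitive relations with $\sigma\wedge\tau\le\sigma,\tau$, $\sigma\le\omega$, $\rho\le\sigma,\tau\Rightarrow\rho\le\sigma\wedge\tau$, and additionally: - $\psi_\bot\sim\omega$ and $\psi_{a\sqcup b}\sim\psi_a\wedge\psi_b$; - $\le_R\subseteq\le_D$; - $\omega\le_D\omega\to\omega$;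 - $\psi_a\le_D\omega\to\psi_a\le_D\psi_a$; - $\omega\le_C\omega\times\omega$; - $(\kappa\to\rho_1)\wedge(\kappa\to\rho_2)\le_D\kappa\to(\rho_1\wedge\rho_2)$; - $(\delta_1\times\kappa_1)\wedge(\delta_2\times\kappa_2)\le_C(\delta_1\wedge\delta_2)\times(\kappa_1\wedge\kappa_2)$; - $\to$ is contravariant in $\Lambda_C$ and covariant in $\Lambda_R$; - $\times$ is covariant in both arguments. Assignment rules, with bases $\Gamma$ (finite maps variables $\to\Lambda_D$), contexts $\Delta$ (finite maps names $\to\Lambda_C$), and $\Gamma(x)$, $\Delta(\alpha)$ equal to $\omega$ outside the domain: - (Ax) $\Gamma,x{:}\delta\vdash x:\delta\mid\Delta$. - (Abs) From $\Gamma\vdash M:\kappa\to\rho\mid\Delta$, $\Gamma(x)=\delta$, infer $\Gamma\setminus x\vdash\lambda x.M:(\delta\times\kappa)\to\rho\mid\Delta$. - (App) From $\Gamma\vdash M:(\delta\times\kappa)\to\rho\mid\Delta$ and $\Gamma\vdash N:\delta\mid\Delta$, infer $\Gamma\vdash MN:\kappa\to\rho\mid\Delta$. - (Cmd) From $\Gamma\vdash M:\delta\mid\Delta$, $\Delta(\alpha)=\kappa$, infer $\Gamma\vdash[\alpha]M:\delta\times\kappa\mid\Delta$. - ($\mu$) From $\Gamma\vdash\mathsf C:(\kappa'\to\rho)\times\kappa'\mid\Delta$, $\Delta(\alpha)=\kappa$, infer $\Gamma\vdash\mu\alpha.\mathsf C:\kappa\to\rho\mid\Delta\setminus\alpha$.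 - ($\wedge$), ($\omega$) ($T:\omega$), and ($\le$) subsumption. Restricted system. Restricted types: $\Lambda^r_D$: $\delta::=\kappa\to\psi\mid\delta\wedge\delta$; $\Lambda^r_C$: $\kappa::=\omega\mid\delta\times\kappa\mid\kappa\wedge\kappa$. A restricted basis (resp. context) assigns only types in $\Lambda^r_D$ (resp. $\Lambda^r_C$). A judgement is restricted if its basis and context are restricted and its predicate is in $\Lambda^r_D\cup\Lambda^r_C$. $\Gamma\vdash_r T:\sigma\mid\Delta$ means the judgement is derivable with the rules above, without rule ($\omega$), and with every judgement in the derivation restricted. *)

From Stdlib Require Import Arith Bool.

Inductive term : Type :=
| Var : nat -> term              (* de Bruijn index of a term variable *)
| Lam : term -> term
| App : term -> term -> term
| Mu  : cmd -> term              (* binds name 0 *)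
with cmd : Type :=
| Named : nat -> term -> cmd.    (* [alpha]M, alpha a de Bruijn name index *)

Fixpoint liftV (c : nat) (t : term) : term :=
  match t with
  | Var n => Var (if Nat.leb c n then S n else n)
  | Lam M => Lam (liftV (S c) M)
  | App M N => App (liftV c M) (liftV c N)
  | Mu C => Mu (liftVc c C)
  end
with liftVc (c : nat) (C : cmd) : cmd :=
  match C with Named a M => Named a (liftV c M) end.

Fixpoint liftN (c : nat) (t : term) : term :=
  match t with
  | Var n => Var n
  | Lam M => Lam (liftN c M)
  | App M N => App (liftN c M) (liftN c N)
  | Mu C => Mu (liftNc (S c) C)
  end
with liftNc (c : nat) (C : cmd) : cmd :=
  match C with
  | Named a M => Named (if Nat.leb c a then S a else a) (liftN c M)
  end.

(* capture-avoiding substitution M[N/k] (variable k removed) *)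
Fixpoint substV (k : nat) (N : term) (t : term) : term :=
  match t with
  | Var n => if Nat.eqb n k then N
             else if Nat.ltb k n then Var (pred n) else Var n
  | Lam M => Lam (substV (S k) (liftV 0 N) M)
  | App M1 M2 => App (substV k N M1) (substV k N M2)
  | Mu C => Mu (substVc k (liftN 0 N) C)
  end
with substVc (k : nat) (N : term) (C : cmd) : cmd :=
  match C with Named a M => Named a (substV k N M) end.

(* structural substitution T[a <= L]: every [a]N becomes [a](N[a<=L])L *)
Fixpoint ssub (a : nat) (L : term) (t : term) : term :=
  match t with
  | Var n => Var n
  | Lam M => Lam (ssub a (liftV 0 L) M)
  | App M N => App (ssub a L M) (ssub a L N)
  | Mu C => Mu (ssubc (S a) (liftN 0 L) C)
  end
with ssubc (a : nat) (L : term) (C : cmd) : cmd :=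
  match C with
  | Named b M =>
      if Nat.eqb b a then Named b (App (ssub a L M) L)
      else Named b (ssub a L M)
  end.

Inductive step : term -> term -> Prop :=
| st_beta M N : step (App (Lam M) N) (substV 0 N M)
| st_mu C N : step (App (Mu C) N) (Mu (ssubc 0 (liftN 0 N) C))
| st_lam M M' : step M M' -> step (Lam M) (Lam M')
| st_appl M M' N : step M M' -> step (App M N) (App M' N)
| st_appr M N N' : step N N' -> step (App M N) (App M N')
| st_mucong C C' : stepc C C' -> step (Mu C) (Mu C')
with stepc : cmd -> cmd -> Prop :=
| stc_named a M M' : step M M' -> stepc (Named a M) (Named a M').

Definition SN (M : term) : Prop := Acc (fun N M0 => step M0 N) M.

(* One raw syntax; the three classes Lambda_R, Lambda_D, Lambda_C are
   carved out by predicates (omega and the rho's are shared).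
   Psi false = psi_bot, Psi true = psi_top = psi. *)
Inductive ty : Type :=
| Psi : bool -> ty
| Om  : ty
| And : ty -> ty -> ty
| Arr : ty -> ty -> ty
| Prod : ty -> ty -> ty.

Fixpoint isR (t : ty) : bool :=
  match t with
  | Psi _ => true
  | Om => true
  | And a b => isR a && isR b
  | _ => false
  end.

Fixpoint isD (t : ty) : bool :=
  match t with
  | Psi _ => true
  | Om => true
  | And a b => isD a && isD b
  | Arr k r => isC k && isR r
  | Prod _ _ => false
  end
with isC (t : ty) : bool :=
  match t with
  | Om => true
  | Prod d k => isD d && isC k
  | And a b => isC a && isC b
  | _ => false
  end.

Fixpoint isRD (t : ty) : bool :=
  match t with
  | Arr k (Psi true) => isRC k
  | And a b => isRD a && isRD b
  | _ => false
  end
with isRC (t : ty) : bool :=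
  match t with
  | Om => true
  | Prod d k => isRD d && isRC k
  | And a b => isRC a && isRC b
  | _ => false
  end.

Inductive srt : Type := SR | SD | SC.

Definition inS (s : srt) (t : ty) : bool :=
  match s with SR => isR t | SD => isD t | SC => isC t end.

Inductive sub : srt -> ty -> ty -> Prop :=
| sub_refl s t : inS s t = true -> sub s t t
| sub_trans s t u v : sub s t u -> sub s u v -> sub s t v
| sub_andl s t u : inS s t = true -> inS s u = true -> sub s (And t u) t
| sub_andr s t u : inS s t = true -> inS s u = true -> sub s (And t u) u
| sub_top s t : inS s t = true -> sub s t Om
| sub_glb s t u v : sub s t u -> sub s t v -> sub s t (And u v)
| sub_bot1 : sub SR (Psi false) Om
| sub_bot2 : sub SR Om (Psi false)
| sub_join1 a b : sub SR (Psi (a || b)) (And (Psi a) (Psi b))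
| sub_join2 a b : sub SR (And (Psi a) (Psi b)) (Psi (a || b))
| sub_RD t u : sub SR t u -> sub SD t u
| sub_om_arr : sub SD Om (Arr Om Om)
| sub_psi_arr a : sub SD (Psi a) (Arr Om (Psi a))
| sub_arr_psi a : sub SD (Arr Om (Psi a)) (Psi a)
| sub_om_prod : sub SC Om (Prod Om Om)
| sub_arr_and k r1 r2 :
    isC k = true -> isR r1 = true -> isR r2 = true ->
    sub SD (And (Arr k r1) (Arr k r2)) (Arr k (And r1 r2))
| sub_prod_and d1 k1 d2 k2 :
    isD d1 = true -> isC k1 = true -> isD d2 = true -> isC k2 = true ->
    sub SC (And (Prod d1 k1) (Prod d2 k2)) (Prod (And d1 d2) (And k1 k2))
| sub_arr k k' r r' : sub SC k' k -> sub SR r r' -> sub SD (Arr k r) (Arr k' r')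
| sub_prod d d' k k' : sub SD d d' -> sub SC k k' -> sub SC (Prod d k) (Prod d' k').

(* finite partial maps: variables (resp. names) -> types; None = outside domain *)
Definition basis := nat -> option ty.
Definition ctx := nat -> option ty.

Definition finite_dom (f : nat -> option ty) : Prop :=
  exists N, forall n, N <= n -> f n = None.

(* Gamma(x), Delta(alpha): omega outside the domain *)
Definition getT (f : nat -> option ty) (n : nat) : ty :=
  match f n with Some t => t | None => Om end.

(* removal of the de Bruijn index 0 (the bound variable / name) *)
Definition tailM (f : nat -> option ty) : nat -> option ty := fun n => f (S n).

Definition rbasis (G : basis) : Prop :=
  finite_dom G /\ forall x t, G x = Some t -> isRD t = true.

Definition rctx (D : ctx) : Prop :=
  finite_dom D /\ forall a t, D a = Some t -> isRC t = true.

Definition rjudg (G : basis) (D : ctx) (s : ty) : Prop :=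
  rbasis G /\ rctx D /\ (isRD s = true \/ isRC s = true).

(* ---------- Restricted derivability  G |-_r T : s | D ----------
   The rules of the full system except (omega); every judgement of
   the derivation is required to be restricted. *)
Inductive rty : basis -> term -> ty -> ctx -> Prop :=
| r_ax G D x d :
    G x = Some d -> isD d = true -> rjudg G D d ->
    rty G (Var x) d D
| r_abs G D M k r :
    rty G M (Arr k r) D -> isC k = true -> isR r = true ->
    isD (getT G 0) = true ->
    rjudg (tailM G) D (Arr (Prod (getT G 0) k) r) ->
    rty (tailM G) (Lam M) (Arr (Prod (getT G 0) k) r) D
| r_app G D M N d k r :
    rty G M (Arr (Prod d k) r) D -> rty G N d D ->
    isD d = true -> isC k = true -> isR r = true ->
    rjudg G D (Arr k r) ->
    rty G (App M N) (Arr k r) D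
| r_mu G D C k' r :
    rtyc G C (Prod (Arr k' r) k') D -> isC k' = true -> isR r = true ->
    isC (getT D 0) = true ->
    rjudg G (tailM D) (Arr (getT D 0) r) ->
    rty G (Mu C) (Arr (getT D 0) r) (tailM D)
| r_and G D M s t :
    rty G M s D -> rty G M t D -> rjudg G D (And s t) ->
    rty G M (And s t) D
| r_sub G D M s t :
    rty G M s D -> sub SD s t -> rjudg G D t ->
    rty G M t D
with rtyc : basis -> cmd -> ty -> ctx -> Prop :=
| r_cmd G D a M d :
    rty G M d D -> isD d = true -> isC (getT D a) = true ->
    rjudg G D (Prod d (getT D a)) ->
    rtyc G (Named a M) (Prod d (getT D a)) D
| rc_and G D C s t :
    rtyc G C s D -> rtyc G C t D -> rjudg G D (And s t) ->
    rtyc G C (And s t) D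
| rc_sub G D C s t :
    rtyc G C s D -> sub SC s t -> rjudg G D t ->
    rtyc G C t D.

(* Reducibility.  Restricted types are read as sets of terms, and of stacks
   (streams of terms, of which only finite prefixes are ever applied).  After
   any renaming, a term of [psi] stays strongly normalising when applied to any
   list of strongly normalising terms, and a term of [kappa -> rho] (with [psi]
   in [rho]) when applied to any prefix of a stack of [kappa]; a stack of
   [delta x kappa] has a strongly normalising head in [delta] and its tail in
   [kappa]; [omega] holds of every term and of every stack of strongly
   normalising terms.  Subtyping is sound for this reading, variables inhabit
   every restricted type, and restricted D-types contain only strongly
   normalising terms.  By induction on derivations, a typed term lies in its
   type under every instantiation that replaces each variable by a member of its
   type and appends to each [[alpha]N] a prefix of a stack of [Delta(alpha)];
   the abstraction and mu cases are head expansions.  The identity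
   instantiation gives the theorem. *)

From Stdlib Require Import Arith Bool List Lia Relations FunctionalExtensionality.
Import ListNotations.

(** * Simultaneous substitution *)

Scheme term_mut := Induction for term Sort Prop
with cmd_mut := Induction for cmd Sort Prop.
Combined Scheme term_cmd_ind from term_mut, cmd_mut.

Notation apps M l := (fold_left App l M).

Definition up_ren (f : nat -> nat) (n : nat) : nat :=
  match n with 0 => 0 | S m => S (f m) end.

Fixpoint ren (xi ze : nat -> nat) (t : term) : term :=
  match t with
  | Var n => Var (xi n)
  | Lam M => Lam (ren (up_ren xi) ze M)
  | App M N => App (ren xi ze M) (ren xi ze N)
  | Mu C => Mu (renc xi (up_ren ze) C)
  end
with renc (xi ze : nat -> nat) (C : cmd) : cmd :=
  match C with Named a M => Named (ze a) (ren xi ze M) end.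

Notation shiftV := (ren S (fun x => x)).
Notation shiftN := (ren (fun x => x) S).

Definition scons {A : Type} (x : A) (f : nat -> A) (n : nat) : A :=
  match n with 0 => x | S m => f m end.

Definition upV_sub (s : nat -> term) (n : nat) : term :=
  match n with 0 => Var 0 | S m => shiftV (s m) end.
Definition upV_stk (th : nat -> list term) (a : nat) : list term :=
  map shiftV (th a).
Definition upN_sub (s : nat -> term) (n : nat) : term := shiftN (s n).
Definition upN_stk_with (L : list term) (th : nat -> list term) (a : nat) :
    list term :=
  map shiftN (scons L th a).
Arguments upN_stk_with L th a /.
Notation upN_stk := (upN_stk_with []).

(* Structural substitution appends [th a] to every [[a]N]; [th] is indexed by
   names before the renaming [ze]. *)
Fixpoint inst (s : nat -> term) (ze : nat -> nat) (th : nat -> list term)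
    (t : term) : term :=
  match t with
  | Var n => s n
  | Lam M => Lam (inst (upV_sub s) ze (upV_stk th) M)
  | App M N => App (inst s ze th M) (inst s ze th N)
  | Mu C => Mu (instc (upN_sub s) (up_ren ze) (upN_stk th) C)
  end
with instc (s : nat -> term) (ze : nat -> nat) (th : nat -> list term)
    (C : cmd) : cmd :=
  match C with Named a M => Named (ze a) (apps (inst s ze th M) (th a)) end.

Definition no_stacks : nat -> list term := fun _ => [].

Lemma ren_apps xi ze M l :
  ren xi ze (apps M l) = apps (ren xi ze M) (map (ren xi ze) l).
Proof. revert M; induction l; simpl; auto. Qed.

Lemma inst_apps s ze th M l :
  inst s ze th (apps M l) = apps (inst s ze th M) (map (inst s ze th) l).
Proof. revert M; induction l; simpl; auto. Qed.

Lemma up_ren_id : up_ren (fun x => x) = (fun x => x).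
Proof. extensionality n; destruct n; reflexivity. Qed.

Ltac binder_case :=
  let n := fresh "n" in
  extensionality n; destruct n; simpl; auto.

Lemma ren_id_all :
  (forall t, ren (fun x => x) (fun x => x) t = t) /\
  (forall C, renc (fun x => x) (fun x => x) C = C).
Proof. apply term_cmd_ind; intros; simpl; rewrite ?up_ren_id; congruence. Qed.

Lemma ren_id t : ren (fun x => x) (fun x => x) t = t.
Proof. apply ren_id_all. Qed.

Lemma ren_ren_all :
  (forall t x1 z1 x2 z2, ren x2 z2 (ren x1 z1 t) =
     ren (fun n => x2 (x1 n)) (fun n => z2 (z1 n)) t) /\
  (forall C x1 z1 x2 z2, renc x2 z2 (renc x1 z1 C) =
     renc (fun n => x2 (x1 n)) (fun n => z2 (z1 n)) C).
Proof.
  apply term_cmd_ind; intros; simpl; rewrite ?H, ?H0; f_equal; f_equal;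
    binder_case.
Qed.

Lemma ren_ren t x1 z1 x2 z2 :
  ren x2 z2 (ren x1 z1 t) = ren (fun n => x2 (x1 n)) (fun n => z2 (z1 n)) t.
Proof. apply ren_ren_all. Qed.

Lemma ren_as_inst_all :
  (forall t xi ze, ren xi ze t = inst (fun n => Var (xi n)) ze no_stacks t) /\
  (forall C xi ze, renc xi ze C = instc (fun n => Var (xi n)) ze no_stacks C).
Proof.
  apply term_cmd_ind; intros; simpl; rewrite ?H, ?H0; f_equal; f_equal;
    binder_case.
Qed.

Lemma ren_as_inst t xi ze : ren xi ze t = inst (fun n => Var (xi n)) ze no_stacks t.
Proof. apply ren_as_inst_all. Qed.

Lemma inst_id t : inst Var (fun x => x) no_stacks t = t.
Proof. rewrite <- (ren_id t) at 2. symmetry; apply ren_as_inst. Qed.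

Lemma instc_id C : instc Var (fun x => x) no_stacks C = C.
Proof. rewrite <- (proj2 ren_as_inst_all). apply ren_id_all. Qed.

Lemma inst_ren_all :
  (forall t s ze th xi z1, inst s ze th (ren xi z1 t) =
     inst (fun n => s (xi n)) (fun n => ze (z1 n)) (fun a => th (z1 a)) t) /\
  (forall C s ze th xi z1, instc s ze th (renc xi z1 C) =
     instc (fun n => s (xi n)) (fun n => ze (z1 n)) (fun a => th (z1 a)) C).
Proof.
  apply term_cmd_ind; intros; simpl; rewrite ?H, ?H0; f_equal; f_equal;
    binder_case.
Qed.

Lemma inst_ren t s ze th xi z1 :
  inst s ze th (ren xi z1 t) =
  inst (fun n => s (xi n)) (fun n => ze (z1 n)) (fun a => th (z1 a)) t.
Proof. apply inst_ren_all. Qed.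

Lemma instc_renc C s ze th xi z1 :
  instc s ze th (renc xi z1 C) =
  instc (fun n => s (xi n)) (fun n => ze (z1 n)) (fun a => th (z1 a)) C.
Proof. apply inst_ren_all. Qed.

Ltac shifted_binder_case :=
  binder_case; unfold upV_stk, upN_sub; rewrite ?map_map;
  try (apply map_ext; intros); rewrite ?ren_ren, ?inst_ren; reflexivity.

Lemma ren_inst_all :
  (forall t s ze th xi z1, ren xi z1 (inst s ze th t) =
     inst (fun n => ren xi z1 (s n)) (fun n => z1 (ze n))
          (fun a => map (ren xi z1) (th a)) t) /\
  (forall C s ze th xi z1, renc xi z1 (instc s ze th C) =
     instc (fun n => ren xi z1 (s n)) (fun n => z1 (ze n))
           (fun a => map (ren xi z1) (th a)) C).
Proof.
  apply term_cmd_ind; intros; simpl; rewrite ?ren_apps, ?H, ?H0; f_equal; f_equal;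
    shifted_binder_case.
Qed.

Lemma ren_inst t s ze th xi z1 :
  ren xi z1 (inst s ze th t) =
  inst (fun n => ren xi z1 (s n)) (fun n => z1 (ze n))
       (fun a => map (ren xi z1) (th a)) t.
Proof. apply ren_inst_all. Qed.

Lemma renc_instc C s ze th xi z1 :
  renc xi z1 (instc s ze th C) =
  instc (fun n => ren xi z1 (s n)) (fun n => z1 (ze n))
        (fun a => map (ren xi z1) (th a)) C.
Proof. apply ren_inst_all. Qed.

Lemma inst_inst_all :
  (forall t s1 z1 t1 s2 z2 t2, inst s2 z2 t2 (inst s1 z1 t1 t) =
     inst (fun n => inst s2 z2 t2 (s1 n)) (fun n => z2 (z1 n))
          (fun a => map (inst s2 z2 t2) (t1 a) ++ t2 (z1 a)) t) /\
  (forall C s1 z1 t1 s2 z2 t2, instc s2 z2 t2 (instc s1 z1 t1 C) =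
     instc (fun n => inst s2 z2 t2 (s1 n)) (fun n => z2 (z1 n))
           (fun a => map (inst s2 z2 t2) (t1 a) ++ t2 (z1 a)) C).
Proof.
  apply term_cmd_ind; intros; simpl; rewrite ?inst_apps, ?H, ?H0, ?fold_left_app;
    f_equal; f_equal; try shifted_binder_case.
  all: binder_case; unfold upV_sub, upV_stk, upN_sub;
    rewrite ?map_app, ?map_map; f_equal; try (apply map_ext; intros);
    rewrite ?inst_ren, ?ren_inst; reflexivity.
Qed.

Lemma inst_inst t s1 z1 t1 s2 z2 t2 :
  inst s2 z2 t2 (inst s1 z1 t1 t) =
  inst (fun n => inst s2 z2 t2 (s1 n)) (fun n => z2 (z1 n))
       (fun a => map (inst s2 z2 t2) (t1 a) ++ t2 (z1 a)) t.
Proof. apply inst_inst_all. Qed.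

Lemma instc_instc C s1 z1 t1 s2 z2 t2 :
  instc s2 z2 t2 (instc s1 z1 t1 C) =
  instc (fun n => inst s2 z2 t2 (s1 n)) (fun n => z2 (z1 n))
        (fun a => map (inst s2 z2 t2) (t1 a) ++ t2 (z1 a)) C.
Proof. apply inst_inst_all. Qed.

Definition bump (c n : nat) : nat := if c <=? n then S n else n.

Lemma up_ren_bump c : up_ren (bump c) = bump (S c).
Proof.
  extensionality n; destruct n; unfold bump; simpl; auto. now destruct (c <=? n).
Qed.

Lemma liftV_ren_all :
  (forall t c, liftV c t = ren (bump c) (fun x => x) t) /\
  (forall C c, liftVc c C = renc (bump c) (fun x => x) C).
Proof.
  apply term_cmd_ind; intros; simpl; rewrite ?H, ?H0, ?up_ren_id, ?up_ren_bump;
    reflexivity.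
Qed.

Lemma liftN_ren_all :
  (forall t c, liftN c t = ren (fun x => x) (bump c) t) /\
  (forall C c, liftNc c C = renc (fun x => x) (bump c) C).
Proof.
  apply term_cmd_ind; intros; simpl; rewrite ?H, ?H0, ?up_ren_id, ?up_ren_bump;
    reflexivity.
Qed.

Lemma liftV0 t : liftV 0 t = shiftV t.
Proof. exact (proj1 liftV_ren_all t 0). Qed.

Lemma liftN0 t : liftN 0 t = shiftN t.
Proof. exact (proj1 liftN_ren_all t 0). Qed.

Definition subst_at (k : nat) (N : term) (n : nat) : term :=
  if n =? k then N else if k <? n then Var (pred n) else Var n.

Definition stack_at (a : nat) (L : term) (b : nat) : list term :=
  if b =? a then [L] else [].

Lemma substV_inst_all :
  (forall t k N, substV k N t = inst (subst_at k N) (fun x => x) no_stacks t) /\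
  (forall C k N, substVc k N C = instc (subst_at k N) (fun x => x) no_stacks C).
Proof.
  apply term_cmd_ind; intros; simpl; rewrite ?H, ?H0, ?up_ren_id; try reflexivity.
  - f_equal; f_equal. extensionality n; destruct n as [|n]; [reflexivity|].
    unfold upV_sub, subst_at; simpl. rewrite liftV0.
    destruct (n =? k); auto.
    change (S k <? S n) with (k <? n).
    destruct (k <? n) eqn:E; simpl; auto.
    apply Nat.ltb_lt in E. destruct n; [lia | reflexivity].
  - f_equal; f_equal.
    + extensionality n; unfold upN_sub, subst_at. rewrite liftN0.
      destruct (n =? k); auto. destruct (k <? n); auto.
    + binder_case.
Qed.

Lemma substV_inst t k N : substV k N t = inst (subst_at k N) (fun x => x) no_stacks t.
Proof. apply substV_inst_all. Qed.

Lemma ssub_inst_all :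
  (forall t a L, ssub a L t = inst Var (fun x => x) (stack_at a L) t) /\
  (forall C a L, ssubc a L C = instc Var (fun x => x) (stack_at a L) C).
Proof.
  apply term_cmd_ind; intros; simpl; rewrite ?H, ?H0, ?up_ren_id; try reflexivity.
  all: try (f_equal; f_equal).
  - binder_case.
  - extensionality b; unfold upV_stk, stack_at. rewrite liftV0. now destruct (b =? a).
  - binder_case; unfold upN_stk_with, stack_at; simpl. rewrite liftN0. now destruct (n =? a).
  - unfold stack_at. now destruct (n =? a).
Qed.

Lemma ssubc_instc C a L : ssubc a L C = instc Var (fun x => x) (stack_at a L) C.
Proof. apply ssub_inst_all. Qed.

Lemma substV0_inst_upV N s ze th A :
  substV 0 N (inst (upV_sub s) ze (upV_stk th) A) = inst (scons N s) ze th A.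
Proof.
  rewrite substV_inst, inst_inst. f_equal.
  - binder_case. rewrite inst_ren. apply inst_id.
  - extensionality a; unfold upV_stk; rewrite map_map, app_nil_r.
    rewrite <- map_id. apply map_ext; intros. rewrite inst_ren. apply inst_id.
Qed.

Lemma inst_substV0 B s ze th A :
  inst s ze th (substV 0 B A) = inst (scons (inst s ze th B) s) ze th A.
Proof. rewrite substV_inst, inst_inst. f_equal. binder_case. Qed.

(* [apps (Mu C) L] reduces to [Mu (ssub_list L C)]. *)
Definition ssub_list (L : list term) (C : cmd) : cmd :=
  instc Var (fun x => x) (upN_stk_with L no_stacks) C.

Lemma ssubc0_ssub_list N C : ssubc 0 (liftN 0 N) C = ssub_list [N] C.
Proof. unfold ssub_list. rewrite ssubc_instc, liftN0. f_equal. binder_case. Qed.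

Lemma ssub_list_nil C : ssub_list [] C = C.
Proof.
  unfold ssub_list. replace (upN_stk_with [] no_stacks) with no_stacks by binder_case.
  apply instc_id.
Qed.

Lemma ssub_list_app L1 L2 C : ssub_list L2 (ssub_list L1 C) = ssub_list (L1 ++ L2) C.
Proof.
  unfold ssub_list. rewrite instc_instc. f_equal.
  binder_case. rewrite map_app, map_map. f_equal. apply map_ext; intros.
  rewrite inst_ren, ren_as_inst. reflexivity.
Qed.

Lemma ssub_list_instc_upN L s ze th C :
  ssub_list L (instc (upN_sub s) (up_ren ze) (upN_stk th) C) =
  instc (upN_sub s) (up_ren ze) (upN_stk_with L th) C.
Proof.
  unfold ssub_list. rewrite instc_instc. f_equal.
  - extensionality n; unfold upN_sub. rewrite inst_ren, <- ren_as_inst. reflexivity.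
  - binder_case. rewrite app_nil_r, map_map. apply map_ext; intros.
    rewrite inst_ren, <- ren_as_inst. reflexivity.
Qed.

Lemma instc_upN_ssub_list L s ze th C :
  instc (upN_sub s) (up_ren ze) (upN_stk th) (ssub_list L C) =
  instc (upN_sub s) (up_ren ze) (upN_stk_with (map (inst s ze th) L) th) C.
Proof.
  unfold ssub_list. rewrite instc_instc. f_equal.
  binder_case. rewrite app_nil_r, !map_map. apply map_ext; intros.
  rewrite inst_ren, ren_inst. reflexivity.
Qed.

(** * Reduction *)

Scheme step_mut := Induction for step Sort Prop
with stepc_mut := Induction for stepc Sort Prop.
Combined Scheme step_cmd_ind from step_mut, stepc_mut.

Lemma step_apps_l X X' l : step X X' -> step (apps X l) (apps X' l).
Proof. revert X X'; induction l; simpl; intros; auto using st_appl. Qed.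

Lemma inst_step_all :
  (forall X Y, step X Y -> forall s ze th, step (inst s ze th X) (inst s ze th Y)) /\
  (forall C C', stepc C C' -> forall s ze th, stepc (instc s ze th C) (instc s ze th C')).
Proof.
  apply step_cmd_ind; intros; simpl; try (constructor; auto).
  - rewrite inst_substV0, <- substV0_inst_upV. constructor.
  - rewrite ssubc0_ssub_list, instc_upN_ssub_list; simpl map.
    rewrite <- (ssub_list_instc_upN [inst s ze th N]), <- ssubc0_ssub_list.
    constructor.
  - apply step_apps_l; auto.
Qed.

Lemma inst_step X Y s ze th : step X Y -> step (inst s ze th X) (inst s ze th Y).
Proof. intros; apply inst_step_all; auto. Qed.

Lemma instc_step C C' s ze th : stepc C C' -> stepc (instc s ze th C) (instc s ze th C').
Proof. intros; apply inst_step_all; auto. Qed.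

Lemma ren_step X Y xi ze : step X Y -> step (ren xi ze X) (ren xi ze Y).
Proof. rewrite !ren_as_inst; apply inst_step. Qed.

Lemma ren_substV0 xi ze A B :
  substV 0 (ren xi ze B) (ren (up_ren xi) ze A) = ren xi ze (substV 0 B A).
Proof.
  rewrite !substV_inst, inst_ren, ren_inst. f_equal. binder_case.
Qed.

Lemma ren_ssubc0 xi ze B C :
  Mu (ssubc 0 (liftN 0 (ren xi ze B)) (renc xi (up_ren ze) C)) =
  ren xi ze (Mu (ssubc 0 (liftN 0 B) C)).
Proof.
  simpl. rewrite !ssubc_instc, !liftN0, instc_renc, renc_instc. do 2 f_equal.
  binder_case. rewrite !ren_ren. reflexivity.
Qed.

Lemma ren_step_inv_all :
  (forall X xi ze Y, step (ren xi ze X) Y -> exists X', step X X' /\ Y = ren xi ze X') /\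
  (forall C xi ze C', stepc (renc xi ze C) C' ->
     exists C0, stepc C C0 /\ C' = renc xi ze C0).
Proof.
  apply term_cmd_ind; simpl; intros;
    match goal with Hs : _ |- _ => inversion Hs; subst; clear Hs end;
    try match goal with
    | IH : forall _ _ _, step (ren _ _ ?t) _ -> _, Hs : step (ren _ _ ?t) _ |- _ =>
        destruct (IH _ _ _ Hs) as [X' [? ->]]
    | IH : forall _ _ _, stepc (renc _ _ ?t) _ -> _, Hs : stepc (renc _ _ ?t) _ |- _ =>
        destruct (IH _ _ _ Hs) as [X' [? ->]]
    end.
  - exists (Lam X'); split; [constructor; auto | reflexivity].
  - match goal with E : Lam _ = ren _ _ t |- _ =>
      destruct t; try discriminate; injection E as -> end.
    exists (substV 0 t0 t); split; [constructor | apply ren_substV0].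
  - match goal with E : Mu _ = ren _ _ t |- _ =>
      destruct t; try discriminate; injection E as -> end.
    exists (Mu (ssubc 0 (liftN 0 t0) c)); split; [constructor | apply ren_ssubc0].
  - exists (App X' t0); split; [constructor; auto | reflexivity].
  - exists (App t X'); split; [constructor; auto | reflexivity].
  - exists (Mu X'); split; [constructor; auto | reflexivity].
  - exists (Named n X'); split; [constructor; auto | reflexivity].
Qed.

Lemma SN_ren X xi ze : SN X -> SN (ren xi ze X).
Proof.
  induction 1 as [X _ IH]. constructor. intros Y HY.
  destruct (proj1 ren_step_inv_all _ _ _ _ HY) as [X' [HX ->]]. now apply IH.
Qed.

(** * Strong normalisation and head expansion *)

Notation star := (clos_refl_trans term step).

Lemma SN_step M N : SN M -> step M N -> SN N.
Proof. intros [H] Hs. now apply H. Qed.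

Lemma SN_star M N : SN M -> star M N -> SN N.
Proof. intros H Hs; induction Hs; eauto using SN_step. Qed.

Lemma SN_var x : SN (Var x).
Proof. constructor; intros y H; inversion H. Qed.

Lemma SN_Lam X : SN X -> SN (Lam X).
Proof.
  induction 1 as [X _ IH]. constructor. intros Y HY. inversion HY; subst. now apply IH.
Qed.

Lemma SN_Mu_Named a X : SN X -> SN (Mu (Named a X)).
Proof.
  induction 1 as [X _ IH]. constructor. intros Y HY. inversion HY; subst.
  match goal with Hc : stepc _ _ |- _ => inversion Hc; subst end. now apply IH.
Qed.

Lemma star_App_l X X' N : star X X' -> star (App X N) (App X' N).
Proof. induction 1; eauto using rt_step, rt_refl, rt_trans, st_appl. Qed.

Lemma star_App_r X N N' : star N N' -> star (App X N) (App X N').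
Proof. induction 1; eauto using rt_step, rt_refl, rt_trans, st_appr. Qed.

Lemma star_Lam X X' : star X X' -> star (Lam X) (Lam X').
Proof. induction 1; eauto using rt_step, rt_refl, rt_trans, st_lam. Qed.

Lemma star_Mu_Named a X X' : star X X' -> star (Mu (Named a X)) (Mu (Named a X')).
Proof. induction 1; eauto using rt_step, rt_refl, rt_trans, st_mucong, stc_named. Qed.

Lemma star_apps_l X X' l : star X X' -> star (apps X l) (apps X' l).
Proof. induction 1; eauto using rt_step, rt_refl, rt_trans, step_apps_l. Qed.

Lemma star_apps_r X l l' : Forall2 star l l' -> star (apps X l) (apps X l').
Proof.
  intros H; revert X; induction H; simpl; intros; [apply rt_refl|].
  eapply rt_trans; [apply star_apps_l, star_App_r; eauto | apply IHForall2].
Qed.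

Lemma star_ren X X' xi ze : star X X' -> star (ren xi ze X) (ren xi ze X').
Proof. induction 1; eauto using rt_step, rt_refl, rt_trans, ren_step. Qed.

Lemma Forall2_star_ren l l' xi ze :
  Forall2 star l l' -> Forall2 star (map (ren xi ze) l) (map (ren xi ze) l').
Proof. induction 1; simpl; constructor; auto using star_ren. Qed.

Lemma inst_star_all :
  (forall t s s' ze th th', (forall n, star (s n) (s' n)) ->
     (forall a, Forall2 star (th a) (th' a)) ->
     star (inst s ze th t) (inst s' ze th' t)) /\
  (forall C s s' ze th th', (forall n, star (s n) (s' n)) ->
     (forall a, Forall2 star (th a) (th' a)) ->
     star (Mu (instc s ze th C)) (Mu (instc s' ze th' C))).
Proof.
  apply term_cmd_ind; simpl; intros.
  - auto.
  - apply star_Lam, H.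
    + intros [|n]; simpl; [apply rt_refl | apply star_ren; auto].
    + intros a; apply Forall2_star_ren; auto.
  - eapply rt_trans; [apply star_App_l, H | apply star_App_r, H0]; auto.
  - apply H.
    + intros n; apply star_ren; auto.
    + intros [|a]; simpl; [constructor | apply Forall2_star_ren; auto].
  - apply star_Mu_Named.
    eapply rt_trans; [apply star_apps_l, H | apply star_apps_r]; auto.
Qed.

Inductive step_list : list term -> list term -> Prop :=
| sl_hd N N' l : step N N' -> step_list (N :: l) (N' :: l)
| sl_tl N l l' : step_list l l' -> step_list (N :: l) (N :: l').

Definition SN_list (l : list term) : Prop := Acc (fun l' l0 => step_list l0 l') l.

Lemma SN_list_cons N l : SN N -> SN_list l -> SN_list (N :: l).
Proof.
  intros HN; revert l. induction HN as [N _ IHN]. intros l Hl.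
  induction Hl as [l Hl IHl]. constructor. intros l' Hs. inversion Hs; subst.
  - apply IHN; [assumption | constructor; assumption].
  - now apply IHl.
Qed.

Lemma Forall_SN_list l : Forall SN l -> SN_list l.
Proof.
  induction 1; [constructor; intros y Hy; inversion Hy | now apply SN_list_cons].
Qed.

Lemma step_list_Forall_SN l l' : step_list l l' -> Forall SN l -> Forall SN l'.
Proof.
  induction 1; intros HF; inversion HF; subst; constructor; eauto using SN_step.
Qed.

Lemma step_list_length l l' : step_list l l' -> length l = length l'.
Proof. induction 1; simpl; auto. Qed.

Lemma step_list_Forall2_star l l' : step_list l l' -> Forall2 star l l'.
Proof.
  induction 1; constructor; auto using rt_step, rt_refl.
  induction l; constructor; auto using rt_refl.
Qed.

Lemma step_apps_r X l l' : step_list l l' -> step (apps X l) (apps X l').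
Proof.
  intros H; revert X; induction H; simpl; intros; auto.
  apply step_apps_l, st_appr; assumption.
Qed.

Inductive apps_step (H : term) (l : list term) : term -> Prop :=
| as_head H' : step H H' -> apps_step H l (apps H' l)
| as_args l' : step_list l l' -> apps_step H l (apps H l')
| as_beta A N l1 : H = Lam A -> l = N :: l1 -> apps_step H l (apps (substV 0 N A) l1)
| as_mu C N l1 : H = Mu C -> l = N :: l1 ->
    apps_step H l (apps (Mu (ssubc 0 (liftN 0 N) C)) l1).

Lemma apps_step_inv H l Y : step (apps H l) Y -> apps_step H l Y.
Proof.
  revert H Y; induction l as [|N l IH]; simpl; intros H Y Hs; [exact (as_head H [] Y Hs)|].
  destruct (IH _ _ Hs) as [H' Hs' | l' Hl | | ]; try discriminate.
  - inversion Hs'; subst.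
    + now apply as_beta.
    + now apply as_mu.
    + apply (as_head H (N :: l) M'); assumption.
    + apply (as_args H (N :: l) (N' :: l)), sl_hd; assumption.
  - apply (as_args H (N :: l) (N :: l')), sl_tl; assumption.
Qed.

Lemma SN_var_apps x l : Forall SN l -> SN (apps (Var x) l).
Proof.
  intros HF. pose proof (Forall_SN_list _ HF) as HL. revert HF.
  induction HL as [l _ IH]. intros HF. constructor. intros Y HY.
  destruct (apps_step_inv _ _ _ HY) as [? Hs | l' Hl | | ]; try discriminate.
  - inversion Hs.
  - apply IH; eauto using step_list_Forall_SN.
Qed.

Lemma SN_beta_expand X N l :
  SN X -> Forall SN (N :: l) -> SN (apps (substV 0 N X) l) ->
  SN (apps (Lam X) (N :: l)).
Proof.
  intros HX HF. apply Forall_SN_list in HF.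
  remember (N :: l) as L eqn:EL. revert L HF N l EL.
  induction HX as [X HX IHX]. intros L HF. induction HF as [L HL IHL].
  intros N l -> Hred. constructor. intros Y HY.
  destruct (apps_step_inv _ _ _ HY) as [H' Hs | l' Hl | A N0 l1 E1 E2 | ];
    try discriminate.
  - inversion Hs; subst. eapply IHX; [eassumption | now constructor | reflexivity |].
    eapply SN_step; [exact Hred|]. apply step_apps_l.
    rewrite !substV_inst. now apply inst_step.
  - inversion Hl; subst.
    + eapply IHL; [eassumption | reflexivity |]. eapply SN_star; [exact Hred|].
      apply star_apps_l. rewrite !substV_inst. apply (proj1 inst_star_all).
      * intros [|n]; simpl; auto using rt_step, rt_refl.
      * intros; constructor.
    + eapply IHL; [eassumption | reflexivity |].
      eapply SN_step; [exact Hred|]. now apply step_apps_r.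
  - injection E1 as ->. injection E2 as -> ->. assumption.
Qed.

Lemma SN_mu_expand L C :
  Forall SN L -> SN (Mu (ssub_list L C)) -> SN (apps (Mu C) L).
Proof.
  remember (length L) as n eqn:Hlen. revert L C Hlen.
  induction n as [|n IHn]; intros L C Hlen HF HZ.
  - destruct L; [|discriminate]. now rewrite ssub_list_nil in HZ.
  - apply Forall_SN_list in HF as HL.
    remember (Mu (ssub_list L C)) as Z eqn:EZ.
    revert C Hlen HF EZ. revert Z HZ. induction HL as [L HL IHL].
    intros Z HZ. induction HZ as [Z HZ IHZ]. intros C Hlen HF ->.
    constructor. intros Y HY.
    destruct (apps_step_inv _ _ _ HY) as [H' Hs | l' Hl | | C0 N0 l1 E1 ->];
      try discriminate.
    + inversion Hs; subst. eapply IHZ; eauto. constructor. now apply instc_step.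
    + eapply IHL; eauto.
      * eapply SN_star; [constructor; exact HZ|].
        apply (proj2 inst_star_all); [intros; apply rt_refl|].
        intros [|a]; simpl; [|constructor].
        apply Forall2_star_ren, step_list_Forall2_star; assumption.
      * now rewrite <- (step_list_length _ _ Hl).
      * eapply step_list_Forall_SN; eauto.
    + injection E1 as ->. inversion HF; subst.
      apply IHn; auto. rewrite ssubc0_ssub_list, ssub_list_app. constructor; exact HZ.
Qed.

(** * Interpretation of types *)

Fixpoint has_psi (t : ty) : bool :=
  match t with
  | Psi b => b
  | And a b => has_psi a || has_psi b
  | _ => false
  end.

Definition SN_in_contexts (M : term) : Prop :=
  forall xi ze l, Forall SN l -> SN (apps (ren xi ze M) l).

Fixpoint prefix (T : nat -> term) (n : nat) : list term :=
  match n with 0 => [] | S m => T 0 :: prefix (fun i => T (S i)) m end.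

(* Ill-sorted arguments ([Prod] as a D-type, [Psi] or [Arr] as a C-type) are
   junk.  Quantifying over renamings keeps the interpretation stable under the
   shifts made when an instantiation crosses a binder. *)
Fixpoint semD (t : ty) (M : term) {struct t} : Prop :=
  match t with
  | Psi b => b = true -> SN_in_contexts M
  | Om => True
  | And a b => semD a M /\ semD b M
  | Arr k r => has_psi r = true ->
      forall xi ze T, semC k T -> forall n, SN (apps (ren xi ze M) (prefix T n))
  | Prod _ _ => True
  end
with semC (t : ty) (T : nat -> term) {struct t} : Prop :=
  match t with
  | Om => forall i, SN (T i)
  | Prod d k => semD d (T 0) /\ SN (T 0) /\ semC k (fun i => T (S i))
  | And a b => semC a T /\ semC b T
  | _ => False
  end.

Lemma prefix_map f T n : map f (prefix T n) = prefix (fun i => f (T i)) n.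
Proof. revert T; induction n; simpl; intros; f_equal; auto. Qed.

Lemma Forall_SN_prefix T n : (forall i, SN (T i)) -> Forall SN (prefix T n).
Proof. revert T; induction n; simpl; intros; constructor; auto. Qed.

Lemma prefix_nth l : prefix (fun i => nth i l (Var 0)) (length l) = l.
Proof. induction l; simpl; f_equal; auto. Qed.

Lemma semC_SN k T : semC k T -> forall i, SN (T i).
Proof.
  revert T; induction k; simpl; intros T H i; try contradiction.
  - auto.
  - destruct H as [H _]. eauto.
  - destruct H as [_ [H1 H2]]. destruct i; auto. apply (IHk2 _ H2).
Qed.

Lemma semD_ren t M xi ze : semD t M -> semD t (ren xi ze M).
Proof.
  revert M; induction t; simpl; intros M HM; auto.
  - intros Hb x z l Hl. rewrite ren_ren. now apply HM.
  - destruct HM; split; auto.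
  - intros Hr x z T HT n. rewrite ren_ren. now apply HM.
Qed.

Lemma semC_ren k T xi ze : semC k T -> semC k (fun i => ren xi ze (T i)).
Proof.
  revert T; induction k; simpl; intros T HT; try contradiction.
  - intros i; apply SN_ren; auto.
  - destruct HT; split; auto.
  - destruct HT as [H1 [H2 H3]].
    split; [apply semD_ren | split; [apply SN_ren | apply (IHk2 _ H3)]]; auto.
Qed.

Lemma semD_R t M : isR t = true -> (semD t M <-> (has_psi t = true -> SN_in_contexts M)).
Proof.
  induction t; simpl; intros H; try discriminate.
  - tauto.
  - split; auto. discriminate.
  - apply andb_true_iff in H as [H1 H2]. rewrite IHt1, IHt2, orb_true_iff by auto.
    tauto.
Qed.

Definition sub_sem (s : srt) (t u : ty) : Prop :=
  match s with
  | SR => isR t = true /\ isR u = true /\ (has_psi u = true -> has_psi t = true)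
  | SD => forall M, semD t M -> semD u M
  | SC => forall T, semC t T -> semC u T
  end.

Lemma sub_sound s t u : sub s t u -> sub_sem s t u.
Proof.
  induction 1; simpl in *.
  all: try (destruct s; simpl in *).
  all: rewrite ?andb_true_iff, ?orb_true_iff in *;
    try solve [intuition (try discriminate; eauto using semC_SN)].
  - destruct IHsub as [Ht [Hu Hpsi]]. intros M HM.
    apply (proj2 (semD_R u M Hu)). intros E. apply (proj1 (semD_R t M Ht) HM); auto.
  - intros M HM Ha xi ze T HT n. apply HM, Forall_SN_prefix; auto.
  - intros M HM Ha xi ze l Hl. rewrite <- (prefix_nth l). apply HM; auto.
    intros i. revert i. induction Hl; intros [|i]; simpl; auto using SN_var.
  - intros M [HM1 HM2] E. apply orb_true_iff in E as [E|E]; auto.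
Qed.

Lemma var_sem t :
  (isRD t = true -> forall x, semD t (Var x)) /\
  (isRC t = true -> semC t (fun _ => Var 0)).
Proof.
  induction t; simpl; split; intros H; try discriminate;
    try apply andb_true_iff in H as [H1 H2].
  - intros; apply SN_var.
  - intros x; split; [apply IHt1 | apply IHt2]; auto.
  - split; [apply IHt1 | apply IHt2]; auto.
  - destruct t2 as [[]| | | |]; try discriminate.
    intros x _ xi ze T HT n.
    apply SN_var_apps, Forall_SN_prefix, semC_SN with t1; assumption.
  - split; [apply IHt1 | split; [apply SN_var | apply IHt2]]; auto.
Qed.

Lemma semD_arr_apps k r M T n :
  has_psi r = true -> semD (Arr k r) M -> semC k T -> SN (apps M (prefix T n)).
Proof.
  intros Hr HM HT. specialize (HM Hr (fun x => x) (fun x => x) T HT n).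
  now rewrite ren_id in HM.
Qed.

Lemma semD_RD_SN d M : isRD d = true -> semD d M -> SN M.
Proof.
  induction d; simpl; intros H HM; try discriminate.
  - apply andb_true_iff in H as [H1 H2]. destruct HM; eauto.
  - destruct d2 as [[]| | | |]; try discriminate.
    apply (semD_arr_apps d1 (Psi true) M (fun _ => Var 0) 0); auto.
    now apply var_sem.
Qed.

(** * Soundness of the restricted system *)

Definition valid_sub (G : basis) (s : nat -> term) : Prop :=
  forall x, semD (getT G x) (s x).

Definition valid_stacks (D : ctx) (th : nat -> list term) (W : nat -> nat -> term) :
    Prop :=
  forall a, semC (getT D a) (W a) /\ exists n, th a = prefix (W a) n.

Lemma valid_sub_ren G s xi ze :
  valid_sub G s -> valid_sub G (fun n => ren xi ze (s n)).
Proof. intros H x; apply semD_ren, H. Qed.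

Lemma valid_stacks_ren D th W xi ze :
  valid_stacks D th W ->
  valid_stacks D (fun a => map (ren xi ze) (th a)) (fun a i => ren xi ze (W a i)).
Proof.
  intros H a. destruct (H a) as [HW [n ->]].
  split; [now apply semC_ren | exists n; apply prefix_map].
Qed.

Lemma valid_sub_scons G N s :
  semD (getT G 0) N -> valid_sub (tailM G) s -> valid_sub G (scons N s).
Proof. intros HN Hs [|x]; [exact HN | apply Hs]. Qed.

Lemma valid_stacks_scons D th T W n :
  semC (getT D 0) T -> valid_stacks (tailM D) th W ->
  valid_stacks D (scons (prefix T n) th) (scons T W).
Proof. intros HT HW [|a]; [split; [exact HT | now exists n] | apply HW]. Qed.

Definition sem_typed (G : basis) (M : term) (d : ty) (D : ctx) : Prop :=
  forall s ze th W, valid_sub G s -> valid_stacks D th W ->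
  semD d (inst s ze th M).

Definition sem_typedc (G : basis) (C : cmd) (k : ty) (D : ctx) : Prop :=
  forall s ze th W, valid_sub G s -> valid_stacks D th W ->
  match C with Named a M => semC k (scons (inst s ze th M) (W a)) end.

Lemma sem_typed_arr G M k r D :
  (has_psi r = true -> forall s ze th W, valid_sub G s -> valid_stacks D th W ->
     forall T, semC k T -> forall n, SN (apps (inst s ze th M) (prefix T n))) ->
  sem_typed G M (Arr k r) D.
Proof.
  intros H s ze th W Hs Hth Hr xi ze' T HT n. rewrite ren_inst.
  eapply H; eauto using valid_sub_ren, valid_stacks_ren.
Qed.

Lemma sem_abs G M k D :
  isRC (Prod (getT G 0) k) = true -> sem_typed G M (Arr k (Psi true)) D ->
  sem_typed (tailM G) (Lam M) (Arr (Prod (getT G 0) k) (Psi true)) D.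
Proof.
  intros Hk IH. simpl in Hk; apply andb_true_iff in Hk as [Hd Hk].
  apply sem_typed_arr. intros _ s ze th W Hs Hth T HT n. cbn [inst].
  assert (Hbody : SN (inst (upV_sub s) ze (upV_stk th) M)).
  { apply semD_RD_SN with (Arr k (Psi true)); [exact Hk |].
    eapply IH; [| apply valid_stacks_ren; eassumption].
    intros [|x]; [now apply var_sem | apply semD_ren, Hs]. }
  destruct n as [|m]; [now apply SN_Lam |].
  destruct HT as [HT0 [HT0_SN HT']]. cbn [prefix].
  apply SN_beta_expand; [exact Hbody | |].
  - constructor; [exact HT0_SN | apply Forall_SN_prefix, semC_SN with k, HT'].
  - rewrite substV0_inst_upV.
    apply (semD_arr_apps k (Psi true)); [reflexivity | | exact HT'].
    eapply IH; [apply valid_sub_scons |]; eassumption.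
Qed.

Lemma sem_app G M N d k r D :
  isRD d = true -> sem_typed G M (Arr (Prod d k) r) D -> sem_typed G N d D ->
  sem_typed G (App M N) (Arr k r) D.
Proof.
  intros Hd IHM IHN s ze th W Hs Hth Hr xi ze' T HT n.
  specialize (IHN s ze th W Hs Hth).
  refine (IHM s ze th W Hs Hth Hr xi ze' (scons (ren xi ze' (inst s ze th N)) T) _ (S n)).
  split; [now apply semD_ren | split; [apply SN_ren, semD_RD_SN with d | exact HT]]; auto.
Qed.

Lemma sem_mu G C k' r D :
  sem_typedc G C (Prod (Arr k' r) k') D ->
  sem_typed G (Mu C) (Arr (getT D 0) r) (tailM D).
Proof.
  intros IH. apply sem_typed_arr. intros Hr s ze th W Hs Hth T HT n.
  apply SN_mu_expand; [now apply Forall_SN_prefix, semC_SN with (getT D 0) |].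
  rewrite ssub_list_instc_upN.
  assert (Hth' : valid_stacks D (upN_stk_with (prefix T n) th)
                   (fun a i => shiftN (scons T W a i)))
    by (apply valid_stacks_ren; eapply valid_stacks_scons; eauto).
  specialize (IH (upN_sub s) (up_ren ze) _ _ (valid_sub_ren _ _ _ _ Hs) Hth').
  destruct C as [b M0]. cbn [instc]. apply SN_Mu_Named.
  destruct IH as [HM0 [_ Hk']]. destruct (Hth' b) as [_ [m ->]].
  eapply semD_arr_apps; eassumption.
Qed.

Lemma sem_cmd G M d a D :
  isRD d = true -> sem_typed G M d D ->
  sem_typedc G (Named a M) (Prod d (getT D a)) D.
Proof.
  intros Hd IH s ze th W Hs Hth. specialize (IH s ze th W Hs Hth).
  split; [exact IH | split; [apply semD_RD_SN with d; assumption | apply Hth]].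
Qed.

Lemma rty_rjudg G M d D : rty G M d D -> rjudg G D d.
Proof. destruct 1; assumption. Qed.

Lemma rjudg_arr G D k r : rjudg G D (Arr k r) -> r = Psi true /\ isRC k = true.
Proof. intros [_ [_ [H | H]]]; [destruct r as [[]| | | |] | ]; easy. Qed.

Lemma rjudg_prod G D d k : rjudg G D (Prod d k) -> isRD d = true.
Proof. intros [_ [_ [H | H]]]; [discriminate | now apply andb_true_iff in H]. Qed.

Scheme rty_mut := Induction for rty Sort Prop
with rtyc_mut := Induction for rtyc Sort Prop.

Theorem rty_sound G M d D : rty G M d D -> sem_typed G M d D.
Proof.
  revert G M d D.
  apply (rty_mut (fun G M d D _ => sem_typed G M d D)
                 (fun G C k D _ => sem_typedc G C k D)).
  - intros G D x d HGx _ _ s ze th W Hs _.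
    specialize (Hs x). unfold getT in Hs. now rewrite HGx in Hs.
  - intros G D M k r _ IH _ _ _ Hj.
    destruct (rjudg_arr _ _ _ _ Hj) as [-> Hk]. now apply sem_abs.
  - intros G D M N d k r HM IHM _ IHN _ _ _ _.
    destruct (rjudg_arr _ _ _ _ (rty_rjudg _ _ _ _ HM)) as [_ Hdk].
    apply andb_true_iff in Hdk as [Hd _]. now apply sem_app with d.
  - intros G D C k' r _ IH _ _ _ _. now apply sem_mu with k'.
  - intros G D M s t _ IHs _ IHt _ sg ze th W Hs Hth. split; eauto.
  - intros G D M s t _ IH Hst _ sg ze th W Hs Hth. apply (sub_sound _ _ _ Hst). eauto.
  - intros G D a M d _ IH _ _ Hj. apply sem_cmd; [now apply rjudg_prod in Hj | exact IH].
  - intros G D [a M] s t _ IHs _ IHt _ sg ze th W Hs Hth. split; eauto.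
  - intros G D [a M] s t _ IH Hst _ sg ze th W Hs Hth.
    apply (sub_sound _ _ _ Hst). eapply IH; eauto.
Qed.

Lemma valid_sub_Var G :
  (forall x t, G x = Some t -> isRD t = true) -> valid_sub G Var.
Proof.
  intros HG x. unfold getT. destruct (G x) eqn:E; [|exact I].
  now apply var_sem, (HG x).
Qed.

Lemma valid_stacks_Var D :
  (forall a t, D a = Some t -> isRC t = true) ->
  valid_stacks D no_stacks (fun _ _ => Var 0).
Proof.
  intros HD a. split; [|now exists 0].
  unfold getT. destruct (D a) eqn:E; [now apply var_sem, (HD a) | intros i; apply SN_var].
Qed.

Theorem theorem6p15 (G : basis) (D : ctx) (M : term) (d : ty) :
  rbasis G -> rctx D -> isRD d = true -> rty G M d D -> SN M.
Proof.
  intros [_ HG] [_ HD] Hd H.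
  apply semD_RD_SN with d; [exact Hd |].
  rewrite <- (inst_id M).
  exact (rty_sound _ _ _ _ H _ (fun x => x) _ _
           (valid_sub_Var G HG) (valid_stacks_Var D HD)).
Qed.
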